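(* Under the standing assumptions below, let $\gamma>0$ and let $\{(y^t,z^t,x^t)\}$ be generated by the PR splitting iteration. Then for every $t\ge 1$, \[ \mathcal{P}_\gamma(y^t,z^t,x^t)\ge f(z^t)+g(z^t)+\frac12\left(\frac1\gamma-L\right)\|y^t-z^t\|^2 . \]
   Context: Standing assumptions: $f:\mathbb{R}^n\to\mathbb{R}$ is differentiable and strongly convex with modulus at least $\sigma>0$, and $\nabla f$ is Lipschitz continuous with modulus at most $L>0$. The function $g:\mathbb{R}^n\to(-\infty,\infty]$ is proper and lower semicontinuous, and for the $\gamma>0$ used, $\operatorname{Argmin}_u\{\gamma g(u)+\frac12\|u-w\|^2\}$ is nonempty for every $w\in\mathbb{R}^n$. PR splitting iteration: given $x^0$ and $\gamma>0$, for $t=0,1,2,\dots$: $y^{t+1}=\operatorname{argmin}_y\{f(y)+\frac{1}{2\gamma}\|y-x^t\|^2\}$; $z^{t+1}\in\operatorname{Argmin}_z\{g(z)+\frac{1}{2\gamma}\|2y^{t+1}-x^t-z\|^2\}$; $x^{t+1}=x^t+2(z^{t+1}-y^{t+1})$. Merit function: $\mathcal{P}_\gamma(y,z,x):=f(y)+g(z)-\frac{3}{2\gamma}\|y-z\|^2+\frac{1}{\gamma}\langle x-y,z-y\rangle$. *)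

From Stdlib Require Import Reals Lra.
From Stdlib Require Fin.
Open Scope R_scope.

Definition vec (n : nat) := Fin.t n -> R.

Fixpoint sumFin (n : nat) : (Fin.t n -> R) -> R :=
  match n with
  | O => fun _ => 0
  | S m => fun f => f Fin.F1 + sumFin m (fun i => f (Fin.FS i))
  end.

Definition vadd {n} (x y : vec n) : vec n := fun i => x i + y i.
Definition vsub {n} (x y : vec n) : vec n := fun i => x i - y i.
Definition vscale {n} (a : R) (x : vec n) : vec n := fun i => a * x i.
Definition inner {n} (x y : vec n) : R := sumFin n (fun i => x i * y i).
Definition norm2 {n} (x : vec n) : R := inner x x.
Definition norm {n} (x : vec n) : R := sqrt (norm2 x).

Definition has_gradient {n} (f : vec n -> R) (gf : vec n -> vec n) : Prop :=
  forall x : vec n, forall eps, 0 < eps -> exists delta, 0 < delta /\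
    forall h : vec n, norm h < delta ->
      Rabs (f (vadd x h) - f x - inner (gf x) h) <= eps * norm h.

Definition differentiable {n} (f : vec n -> R) : Prop :=
  exists gf, has_gradient f gf.

Definition strongly_convex {n} (f : vec n -> R) (sigma : R) : Prop :=
  forall (x y : vec n) (t : R), 0 <= t <= 1 ->
    f (vadd (vscale t x) (vscale (1 - t) y))
      <= t * f x + (1 - t) * f y - sigma / 2 * t * (1 - t) * norm2 (vsub x y).

Definition lipschitz {n} (G : vec n -> vec n) (L : R) : Prop :=
  forall x y : vec n, norm (vsub (G x) (G y)) <= L * norm (vsub x y).

(* Extended reals (-oo, +oo]: Some r = r, None = +oo *)
Definition ereal := option R.
Definition ele (a b : ereal) : Prop :=
  match a, b with
  | _, None => True
  | None, Some _ => False
  | Some x, Some y => x <= y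
  end.
Definition elt_r (a : R) (b : ereal) : Prop :=
  match b with None => True | Some y => a < y end.
Definition eaddr (r : R) (b : ereal) : ereal :=
  match b with None => None | Some y => Some (r + y) end.
Definition escale (c : R) (b : ereal) : ereal :=   (* used with c > 0 *)
  match b with None => None | Some y => Some (c * y) end.

Definition proper {n} (g : vec n -> ereal) : Prop := exists x, g x <> None.

Definition lsc {n} (g : vec n -> ereal) : Prop :=
  forall (x : vec n) (a : R), elt_r a (g x) ->
    exists delta, 0 < delta /\
      forall y : vec n, norm (vsub y x) < delta -> elt_r a (g y).

Definition is_argmin {n} (phi : vec n -> ereal) (u : vec n) : Prop :=
  forall v, ele (phi u) (phi v).

Definition merit {n} (f : vec n -> R) (g : vec n -> ereal) (gamma : R)
  (y z x : vec n) : ereal :=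
  eaddr (f y - 3 / (2 * gamma) * norm2 (vsub y z)
           + 1 / gamma * inner (vsub x y) (vsub z y)) (g z).

(* The proximal step for [f] gives [grad f y = (x - y)/gamma], where [x] is the previous
   iterate.  Since the new iterate is [x + 2 (z - y)], the merit function collapses to
   [f y + <grad f y, z - y> + ||z - y||^2 / (2 gamma) + g z], and the descent lemma
   [f z <= f y + <grad f y, z - y> + L/2 ||z - y||^2] finishes the estimate. *)
From Stdlib Require Import Reals Lra Psatz FunctionalExtensionality.
Open Scope R_scope.

Lemma sumFin_ext n (f g : Fin.t n -> R) :
  (forall i, f i = g i) -> sumFin n f = sumFin n g.
Proof.
  induction n as [|n IH]; simpl; intros H; [reflexivity|].
  rewrite H, (IH _ (fun i => g (Fin.FS i))); auto.
Qed.

Lemma sumFin_add n (f g : Fin.t n -> R) :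
  sumFin n (fun i => f i + g i) = sumFin n f + sumFin n g.
Proof.
  induction n as [|n IH]; simpl; [ring|].
  rewrite (IH (fun i => f (Fin.FS i)) (fun i => g (Fin.FS i))); ring.
Qed.

Lemma sumFin_scal n c (f : Fin.t n -> R) :
  sumFin n (fun i => c * f i) = c * sumFin n f.
Proof.
  induction n as [|n IH]; simpl; [ring|].
  rewrite (IH (fun i => f (Fin.FS i))); ring.
Qed.

Lemma sumFin_nonneg n (f : Fin.t n -> R) :
  (forall i, 0 <= f i) -> 0 <= sumFin n f.
Proof.
  induction n as [|n IH]; simpl; intros H; [lra|].
  pose proof (H Fin.F1); pose proof (IH (fun i => f (Fin.FS i)) (fun i => H _)); lra.
Qed.

Lemma inner_comm n (u v : vec n) : inner u v = inner v u.
Proof. apply sumFin_ext; intro; ring. Qed.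

Lemma inner_addl n (u v w : vec n) : inner (vadd u v) w = inner u w + inner v w.
Proof. unfold inner; rewrite <- sumFin_add; apply sumFin_ext; intro; unfold vadd; ring. Qed.

Lemma inner_scall n a (u w : vec n) : inner (vscale a u) w = a * inner u w.
Proof. unfold inner; rewrite <- sumFin_scal; apply sumFin_ext; intro; unfold vscale; ring. Qed.

Lemma inner_subl n (u v w : vec n) : inner (vsub u v) w = inner u w - inner v w.
Proof.
  replace (vsub u v) with (vadd u (vscale (-1) v))
    by (apply functional_extensionality; intro; unfold vadd, vscale, vsub; ring).
  rewrite inner_addl, inner_scall; ring.
Qed.

Lemma inner_scalr n a (u w : vec n) : inner u (vscale a w) = a * inner u w.
Proof. rewrite inner_comm, inner_scall, inner_comm; reflexivity. Qed.

Lemma norm2_nonneg n (x : vec n) : 0 <= norm2 x.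
Proof. apply sumFin_nonneg; intro; nra. Qed.

Lemma norm2_vsub_comm n (u v : vec n) : norm2 (vsub u v) = norm2 (vsub v u).
Proof. apply sumFin_ext; intro; unfold vsub; ring. Qed.

Lemma norm2_add_scale n (w h : vec n) s :
  norm2 (vadd w (vscale s h)) = norm2 w + 2 * s * inner w h + s * s * norm2 h.
Proof.
  unfold norm2, inner; rewrite <- !sumFin_scal, <- !sumFin_add.
  apply sumFin_ext; intro; unfold vadd, vscale; ring.
Qed.

Lemma norm_nonneg n (x : vec n) : 0 <= norm x.
Proof. apply sqrt_pos. Qed.

Lemma norm_sqr n (x : vec n) : norm x * norm x = norm2 x.
Proof. apply sqrt_sqrt, norm2_nonneg. Qed.

Lemma norm_vscale n s (h : vec n) : norm (vscale s h) = Rabs s * norm h.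
Proof.
  unfold norm; rewrite <- sqrt_Rsqr_abs, <- sqrt_mult_alt by apply Rle_0_sqr.
  f_equal; unfold norm2; rewrite inner_scall, inner_scalr; unfold Rsqr; ring.
Qed.

Lemma quadratic_nonneg_discr A B C :
  0 <= C -> (forall s, 0 <= A + 2 * B * s + C * (s * s)) -> B * B <= A * C.
Proof.
  intros HC Hq. destruct (Req_dec C 0) as [C0|C0].
  - destruct (Req_dec B 0) as [B0|B0]; [subst; lra|].
    specialize (Hq (- (A + 1) / (2 * B))).
    replace (A + 2 * B * (- (A + 1) / (2 * B)) + C * _) with (-1) in Hq
      by (subst C; field; exact B0); lra.
  - specialize (Hq (- B / C)).
    replace (A + 2 * B * (- B / C) + C * (- B / C * (- B / C))) with ((A * C - B * B) / C)
      in Hq by (field; exact C0).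
    assert (0 < C) by lra.
    apply Rmult_le_compat_r with (r := C) in Hq; [|lra].
    unfold Rdiv in Hq; rewrite Rmult_assoc, Rinv_l in Hq; lra.
Qed.

Lemma cauchy_schwarz n (x y : vec n) : inner x y <= norm x * norm y.
Proof.
  assert (Hsq : inner x y * inner x y <= norm2 x * norm2 y).
  { apply quadratic_nonneg_discr; [apply norm2_nonneg|].
    intro s; pose proof (norm2_nonneg n (vadd x (vscale s y))) as Hs.
    rewrite norm2_add_scale in Hs; lra. }
  unfold norm; rewrite <- sqrt_mult_alt by apply norm2_nonneg.
  apply Rle_trans with (Rabs (inner x y)); [apply Rle_abs|].
  rewrite <- sqrt_Rsqr_abs; apply sqrt_le_1_alt; exact Hsq.
Qed.

Lemma derivable_pt_lim_quadratic A B C s :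
  derivable_pt_lim (fun s => A + B * s + C * (s * s)) s (B + 2 * C * s).
Proof.
  replace (B + 2 * C * s) with (0 + (B * 1 + C * (1 * id s + id s * 1))) by (unfold id; ring).
  apply derivable_pt_lim_ext with
    (f := (fct_cte A + (mult_real_fct B id + mult_real_fct C (id * id)))%F).
  { intro; unfold plus_fct, mult_real_fct, mult_fct, fct_cte, id; ring. }
  apply derivable_pt_lim_plus; [apply derivable_pt_lim_const|].
  apply derivable_pt_lim_plus; apply derivable_pt_lim_scal; [apply derivable_pt_lim_id|].
  apply derivable_pt_lim_mult; apply derivable_pt_lim_id.
Qed.

Lemma derivable_pt_lim_add_quadratic (F : R -> R) A B C s l :
  derivable_pt_lim F s l ->
  derivable_pt_lim (fun s => F s + (A + B * s + C * (s * s))) s (l + (B + 2 * C * s)).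
Proof.
  intro HF; apply (derivable_pt_lim_plus F (fun s => A + B * s + C * (s * s))); auto.
  apply derivable_pt_lim_quadratic.
Qed.

Section Smooth.

Variables (n : nat) (f : vec n -> R) (gf : vec n -> vec n).
Hypothesis Hgrad : has_gradient f gf.

Lemma has_gradient_line (y h : vec n) s :
  derivable_pt_lim (fun s => f (vadd y (vscale s h))) s (inner (gf (vadd y (vscale s h))) h).
Proof.
  intros eps Heps. set (p := vadd y (vscale s h)).
  pose proof (norm_nonneg n h) as Hh.
  destruct (Hgrad p (eps / (2 * (norm h + 1)))) as [d [Hd Hfd]].
  { apply Rdiv_lt_0_compat; lra. }
  assert (Hd' : 0 < d / (norm h + 1)) by (apply Rdiv_lt_0_compat; lra).
  exists (mkposreal _ Hd'); simpl; intros del Hdel Hlt.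
  assert (Hstep : norm (vscale del h) < d).
  { rewrite norm_vscale.
    apply Rle_lt_trans with (Rabs del * (norm h + 1)); [pose proof (Rabs_pos del); nra|].
    replace d with (d / (norm h + 1) * (norm h + 1)) by (field; lra).
    apply Rmult_lt_compat_r; lra. }
  specialize (Hfd _ Hstep).
  replace (vadd p (vscale del h)) with (vadd y (vscale (s + del) h)) in Hfd
    by (apply functional_extensionality; intro; unfold p, vadd, vscale; ring).
  rewrite inner_scalr, norm_vscale in Hfd; fold p.
  assert (Hdel_pos : 0 < Rabs del) by (apply Rabs_pos_lt; auto).
  replace ((f (vadd y (vscale (s + del) h)) - f p) / del - inner (gf p) h)
    with ((f (vadd y (vscale (s + del) h)) - f p - del * inner (gf p) h) / del) by (field; auto).
  unfold Rdiv at 1; rewrite Rabs_mult, Rabs_inv.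
  apply Rle_lt_trans with (eps / (2 * (norm h + 1)) * (Rabs del * norm h) * / Rabs del).
  { apply Rmult_le_compat_r; [left; apply Rinv_0_lt_compat|]; auto. }
  replace (eps / (2 * (norm h + 1)) * (Rabs del * norm h) * / Rabs del)
    with (eps * (norm h / (2 * (norm h + 1)))) by (field; lra).
  assert (norm h / (2 * (norm h + 1)) < 1).
  { apply Rmult_lt_reg_r with (2 * (norm h + 1)); [lra|].
    unfold Rdiv; rewrite Rmult_assoc, Rinv_l; lra. }
  nra.
Qed.

Lemma descent_lemma L (Hlip : lipschitz gf L) (HL : 0 < L) (y z : vec n) :
  f z <= f y + inner (gf y) (vsub z y) + L / 2 * norm2 (vsub z y).
Proof.
  set (h := vsub z y); set (a := inner (gf y) h); set (N := norm2 h).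
  (* Mean value theorem for [f (y + s h) - a s - L N s^2 / 2], whose derivative is [<= 0] on [0,1]. *)
  destruct (MVT_cor2
     (fun s => f (vadd y (vscale s h)) + (0 + (- a) * s + (- (L / 2 * N)) * (s * s)))
     (fun s => inner (gf (vadd y (vscale s h))) h + (- a + 2 * (- (L / 2 * N)) * s))
     0 1 Rlt_0_1) as [c [Hmvt Hc]].
  { intros c _; apply derivable_pt_lim_add_quadratic, has_gradient_line. }
  replace (vadd y (vscale 1 h)) with z in Hmvt
    by (apply functional_extensionality; intro; unfold h, vadd, vscale, vsub; ring).
  replace (vadd y (vscale 0 h)) with y in Hmvt
    by (apply functional_extensionality; intro; unfold vadd, vscale; ring).
  assert (Hslope : inner (gf (vadd y (vscale c h))) h - a <= L * c * N).
  { unfold a; rewrite <- inner_subl.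
    eapply Rle_trans; [apply cauchy_schwarz|].
    pose proof (Hlip (vadd y (vscale c h)) y) as Hl.
    replace (vsub (vadd y (vscale c h)) y) with (vscale c h) in Hl
      by (apply functional_extensionality; intro; unfold vadd, vscale, vsub; ring).
    rewrite norm_vscale, Rabs_right in Hl by lra.
    assert (norm h * norm h = N) by apply norm_sqr.
    pose proof (norm_nonneg n h).
    pose proof (norm_nonneg n (vsub (gf (vadd y (vscale c h))) (gf y))).
    nra. }
  nra.
Qed.

Lemma prox_optimality gamma (Hgamma : 0 < gamma) (y w : vec n)
  (Hmin : forall v, f y + 1 / (2 * gamma) * norm2 (vsub y w)
                    <= f v + 1 / (2 * gamma) * norm2 (vsub v w))
  (h : vec n) :
  inner (gf y) h + 1 / gamma * inner (vsub y w) h = 0.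
Proof.
  set (c := 1 / (2 * gamma)); set (d := vsub y w).
  set (G := fun s => f (vadd y (vscale s h))
                     + (c * norm2 d + (c * 2 * inner d h) * s + (c * norm2 h) * (s * s))).
  assert (HG : derivable_pt_lim G 0
                 (inner (gf (vadd y (vscale 0 h))) h + (c * 2 * inner d h + 2 * (c * norm2 h) * 0))).
  { apply derivable_pt_lim_add_quadratic, has_gradient_line. }
  replace (vadd y (vscale 0 h)) with y in HG
    by (apply functional_extensionality; intro; unfold vadd, vscale; ring).
  assert (HG0 : forall s, G 0 <= G s).
  { intro s; unfold G.
    replace (vadd y (vscale 0 h)) with y
      by (apply functional_extensionality; intro; unfold vadd, vscale; ring).
    pose proof (Hmin (vadd y (vscale s h))) as Hs.
    replace (vsub (vadd y (vscale s h)) w) with (vadd d (vscale s h)) in Hs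
      by (apply functional_extensionality; intro; unfold d, vadd, vscale, vsub; ring).
    rewrite norm2_add_scale in Hs; fold c d in Hs; lra. }
  pose (pr := exist (fun l => derivable_pt_lim G 0 l) _ HG : derivable_pt G 0).
  pose proof (deriv_minimum G (-1) 1 0 pr ltac:(lra) ltac:(lra) (fun s _ _ => HG0 s)) as Hcrit.
  rewrite (derive_pt_eq_0 G 0 _ pr HG) in Hcrit.
  unfold c in Hcrit; replace (1 / (2 * gamma) * 2) with (1 / gamma) in Hcrit by (field; lra).
  lra.
Qed.

Lemma merit_smooth_part_ge L (Hlip : lipschitz gf L) (HL : 0 < L)
  gamma (Hgamma : 0 < gamma) (w y z : vec n)
  (Hmin : forall v, f y + 1 / (2 * gamma) * norm2 (vsub y w)
                    <= f v + 1 / (2 * gamma) * norm2 (vsub v w)) :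
  f z + 1 / 2 * (1 / gamma - L) * norm2 (vsub y z)
  <= f y - 3 / (2 * gamma) * norm2 (vsub y z)
     + 1 / gamma * inner (vsub (vadd w (vscale 2 (vsub z y))) y) (vsub z y).
Proof.
  pose proof (prox_optimality gamma Hgamma y w Hmin (vsub z y)) as Hopt.
  pose proof (descent_lemma L Hlip HL y z) as Hdesc.
  replace (vsub (vadd w (vscale 2 (vsub z y))) y)
    with (vadd (vscale (-1) (vsub y w)) (vscale 2 (vsub z y)))
    by (apply functional_extensionality; intro; unfold vadd, vscale, vsub; ring).
  rewrite inner_addl, !inner_scall, norm2_vsub_comm.
  fold (norm2 (vsub z y)) in *.
  set (N := norm2 (vsub z y)) in *; set (I := inner (vsub y w) (vsub z y)) in *.
  replace (1 / gamma * (-1 * I + 2 * N)) with (- (1 / gamma * I) + 2 * (1 / gamma) * N)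
    by (field; lra).
  replace (3 / (2 * gamma) * N) with (3 / 2 * (1 / gamma) * N) by (field; lra).
  lra.
Qed.

End Smooth.

Lemma ele_eaddr_l (a b : R) (e : ereal) : a <= b -> ele (eaddr a e) (eaddr b e).
Proof. destruct e; simpl; [lra | tauto]. Qed.

Theorem mainTheorem3 (n : nat) (f : vec n -> R) (gf : vec n -> vec n)
  (g : vec n -> ereal) (sigma L gamma : R)
  (Hsigma : 0 < sigma) (HL : 0 < L)
  (Hgrad : has_gradient f gf) (Hsc : strongly_convex f sigma)
  (Hlip : lipschitz gf L)
  (Hproper : proper g) (Hlsc : lsc g)
  (Hgamma : 0 < gamma)
  (Hprox : forall w : vec n, exists u : vec n,
      is_argmin (fun u => eaddr (1 / 2 * norm2 (vsub u w)) (escale gamma (g u))) u)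
  (x0 : vec n) (y z x : nat -> vec n)
  (Hx0 : x 0%nat = x0)
  (Hy : forall t : nat, forall v : vec n,
      f (y (S t)) + 1 / (2 * gamma) * norm2 (vsub (y (S t)) (x t))
        <= f v + 1 / (2 * gamma) * norm2 (vsub v (x t)))
  (Hz : forall t : nat,
      is_argmin (fun w => eaddr (1 / (2 * gamma) *
          norm2 (vsub (vsub (vscale 2 (y (S t))) (x t)) w)) (g w)) (z (S t)))
  (Hx : forall t : nat,
      x (S t) = vadd (x t) (vscale 2 (vsub (z (S t)) (y (S t))))) :
  forall t : nat, (1 <= t)%nat ->
    ele (eaddr (f (z t) + 1 / 2 * (1 / gamma - L) * norm2 (vsub (y t) (z t))) (g (z t)))
        (merit f g gamma (y t) (z t) (x t)).
Proof.
  intros [|t] Ht; [lia|].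
  unfold merit; rewrite Hx.
  apply ele_eaddr_l, (merit_smooth_part_ge n f gf Hgrad L Hlip HL gamma Hgamma), Hy.
Qed.
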